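(* Let $(\tilde\Theta^n_I)$ be a congruent family of covariant $n$-tensor fields on $\mathcal M_+(I)$, $I$ ranging over finite sets, and for a partition $\mathbf P$ of $\{1,\dots,n\}$, a finite set $I$ with $|I|\ge|\mathbf P|$ and $\lambda>0$ let $\theta^{\mathbf P}_{I,\lambda c_I}:=(\tilde\Theta^n_I)_{\lambda c_I}(\delta_{i_1},\dots,\delta_{i_n})$ for any multiindex $\vec i\in I^n$ with $\mathbf P(\vec i)=\mathbf P$ (this does not depend on the choice of $\vec i$). Suppose $\mathbf P_0$ is a partition of $\{1,\dots,n\}$ such that $\theta^{\mathbf P}_{I,\lambda c_I}=0$ for all partitions $\mathbf P<\mathbf P_0$, all $\lambda>0$ and all finite $I$ (for which it is defined). Then there is a continuous function $f_{\mathbf P_0}:(0,\infty)\to\mathbb R$ such that $\theta^{\mathbf P_0}_{I,\lambda c_I}=f_{\mathbf P_0}(\lambda)\,|I|^{n-|\mathbf P_0|}$ for all $\lambda>0$ and all finite sets $I$ with $|I|\ge|\mathbf P_0|$.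
   Context: For a finite set $I$: $\mathcal S(I)=\{\sum_{i\in I}x_i\delta_i:x_i\in\mathbb R\}$, $\mathcal M_+(I)=\{\sum\mu_i\delta_i:\mu_i>0\}$ (tangent space $\mathcal S(I)$), $c_I:=\frac1{|I|}\sum_{i\in I}\delta_i$. A covariant $n$-tensor field on $\mathcal M_+(I)$ is a continuously varying family of $n$-multilinear forms on $\mathcal S(I)$. A Markov kernel $K:I\to\mathcal P(I')$ between finite sets is a stochastic matrix $K(i)=\sum_{i'}K^i_{i'}\delta_{i'}$ with $K_*(\sum x_i\delta_i)=\sum_{i,i'}K^i_{i'}x_i\delta_{i'}$; it is congruent if there is a map $\kappa:I'\to I$ with $K^i_{i'}=0$ whenever $\kappa(i')\ne i$. The family is congruent if $(\tilde\Theta^n_{I'})_{K_*\mu}(K_*V_1,\dots,K_*V_n)=(\tilde\Theta^n_I)_\mu(V_1,\dots,V_n)$ for every congruent Markov kernel $K:I\to\mathcal P(I')$ between finite sets with $K_*(\mathcal M_+(I))\subset\mathcal M_+(I')$. For $\vec i\in I^n$, $\mathbf P(\vec i)$ is the partition of $\{1,\dots,n\}$ into classes of $k\sim l\iff i_k=i_l$. $|\mathbf P|$ is the number of blocks. Partitions are ordered by $\mathbf P\le\mathbf P'$ iff $\mathbf P$ is a subdivision (refinement) of $\mathbf P'$; $\mathbf P<\mathbf P'$ means $\mathbf P\le\mathbf P'$ and $\mathbf P\ne\mathbf P'$. *)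

From HB Require Import structures.
From mathcomp Require Import all_boot all_order all_algebra.
From mathcomp Require Import all_classical all_reals all_analysis.
Set Implicit Arguments. Unset Strict Implicit. Unset Printing Implicit Defensive.
Import Order.TTheory GRing.Theory Num.Theory.
Local Open Scope ring_scope.

Section Defs.
Variable R : realType.

(* S(I) is modelled as functions I -> R ; x = sum_i x i delta_i. *)
Definition posmeas (I : finType) (mu : I -> R) : Prop := forall i, 0 < mu i.

Definition delta_pt (I : finType) (i : I) : I -> R := fun j => if j == i then 1 else 0.

(* c_I scaled by lambda : lambda * (1/|I|) sum_i delta_i *)
Definition scaled_c (I : finType) (lambda : R) : I -> R := fun _ => lambda / #|I|%:R.

Definition tensor_field (n : nat) (I : finType) := (I -> R) -> ('I_n -> (I -> R)) -> R.

Definition upd (n : nat) (I : finType) (V : 'I_n -> (I -> R)) (k : 'I_n) (x : I -> R) :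
  'I_n -> (I -> R) := fun l => if l == k then x else V l.

Definition multilinear_at (n : nat) (I : finType) (T : tensor_field n I) (mu : I -> R) :=
  forall (V : 'I_n -> (I -> R)) (k : 'I_n) (a : R) (x y : I -> R),
    T mu (upd V k (fun i => a * x i + y i)) = a * T mu (upd V k x) + T mu (upd V k y).

(* continuity of mu |-> T mu V on M_+(I) (epsilon-delta for the max-norm on R^I);
   for multilinear forms in finite dimension this is continuity of the tensor field. *)
Definition continuous_field (n : nat) (I : finType) (T : tensor_field n I) :=
  forall (V : 'I_n -> (I -> R)) (mu : I -> R), posmeas mu ->
    forall eps : R, 0 < eps -> exists2 d : R, 0 < d &
      forall nu : I -> R, posmeas nu -> (forall i, `|nu i - mu i| < d) ->
        `|T nu V - T mu V| < eps.

Definition covariant_tensor_field (n : nat) (I : finType) (T : tensor_field n I) :=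
  (forall mu, posmeas mu -> multilinear_at T mu) /\ continuous_field T.

(* Markov kernels K : I -> P(I') as stochastic matrices K i i' *)
Definition markov_kernel (I I' : finType) (K : I -> I' -> R) : Prop :=
  (forall i i', 0 <= K i i') /\ (forall i, \sum_(i' : I') K i i' = 1).

Definition congruent_kernel (I I' : finType) (K : I -> I' -> R) : Prop :=
  markov_kernel K /\
  exists kappa : I' -> I, forall i i', kappa i' != i -> K i i' = 0.

Definition push (I I' : finType) (K : I -> I' -> R) (x : I -> R) : I' -> R :=
  fun i' => \sum_(i : I) K i i' * x i.

Definition congruent_family (n : nat) (Theta : forall I : finType, tensor_field n I) :=
  (forall I : finType, covariant_tensor_field (Theta I)) /\
  forall (I I' : finType) (K : I -> I' -> R),
    congruent_kernel K ->
    (forall mu : I -> R, posmeas mu -> posmeas (push K mu)) ->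
    forall (mu : I -> R), posmeas mu -> forall V : 'I_n -> (I -> R),
      Theta I' (push K mu) (fun k => push K (V k)) = Theta I mu V.

End Defs.

Definition part_of (n : nat) (I : finType) (iv : 'I_n -> I) : {set {set 'I_n}} :=
  preim_partition iv [set: 'I_n].

Definition refines (n : nat) (P P' : {set {set 'I_n}}) : Prop :=
  forall B, B \in P -> exists2 C, C \in P' & B \subset C.

Definition strictly_refines (n : nat) (P P' : {set {set 'I_n}}) : Prop :=
  refines P P' /\ P != P'.

From HB Require Import structures.
From mathcomp Require Import all_boot all_order all_algebra.
From mathcomp Require Import all_classical all_reals all_analysis.
From mathcomp Require Import fingroup perm.

(* Pushing forward along the projection I * J -> I with uniform weights 1/|J|, a
   congruent Markov kernel, sends lambda c_I to lambda c_(I*J) and delta_i to the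
   average of the delta_(i,j).  Expanding Theta multilinearly, the terms whose
   multiindex has a partition strictly finer than P0 vanish by hypothesis, and the
   |J|^|P0| remaining ones all equal theta^P0_(I*J), since theta only depends on
   the partition of the multiindex (relabel by a permutation of I).  Hence
   theta^P0_(I*J) = |J|^(n-|P0|) theta^P0_I, and exchanging the roles of I and J
   shows that theta^P0_I / |I|^(n-|P0|) does not depend on I. *)

Import Order.TTheory GRing.Theory Num.Theory numFieldNormedType.Exports.
Local Open Scope ring_scope.

Lemma perm_extend_in (T : finType) (phi : T -> T) (r : seq T) :
  {in r &, injective phi} -> exists s : {perm T}, {in r, forall x, s x = phi x}.
Proof.
elim: r => [|a r IHr] phi_inj; first by exists 1%g.
have [|s sE] := IHr; first by apply: sub_in2 phi_inj => x; rewrite inE orbC => ->.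
exists (s * tperm (s a) (phi a))%g => x; rewrite in_cons permM.
case/predU1P=> [-> | xr]; first by rewrite tpermL.
have [-> | xa] := eqVneq x a; first by rewrite tpermL.
have phi_ax : phi a != phi x.
  by apply: contra_neq xa => /phi_inj-> //; rewrite in_cons ?eqxx ?xr ?orbT.
by rewrite (sE x xr) tpermD // -(sE x xr) (inj_eq perm_inj) eq_sym.
Qed.

Lemma leq_card_partition {T : finType} {P : {set {set T}}} {D : {set T}} :
  finset.partition P D -> (#|P| <= #|D|)%N.
Proof.
move=> partP; rewrite (finset.card_partition partP) -sum1_card leq_sum // => A AP.
by rewrite card_gt0; apply: contraTneq AP => ->; case/and3P: partP.
Qed.

Lemma card_ffun_blockwise_const (T J : finType) (P : {set {set T}}) :
  finset.partition P [set: T] ->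
  #|[set g : {ffun T -> J} | [forall x, forall y, (y \in finset.pblock P x) ==> (g y == g x)]]|
    = (#|J| ^ #|P|)%N.
Proof.
case/and3P=> /eqP coverP trivP set0P.
have blockP x : finset.pblock P x \in P by rewrite finset.pblock_mem // coverP inE.
pose S := {B : {set T} | B \in P}.
pose blk x : S := exist _ (finset.pblock P x) (blockP x).
have blkK (B : S) x : x \in val B -> blk x = B.
  by move=> xB; apply: val_inj; rewrite /= (finset.def_pblock trivP (valP B) xB).
have memB (B : S) : exists x, x \in val B.
  by apply/set0Pn; apply: contraNneq set0P => <-; exact: valP.
pose lift (h : {ffun S -> J}) := [ffun x => h (blk x)].
have lift_inj : injective lift.
  move=> h1 h2 /ffunP eq12; apply/ffunP => B; have [x /blkK <-] := memB B.
  by have := eq12 x; rewrite !ffunE.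
suff -> : [set g : {ffun T -> J} | [forall x, forall y, (y \in finset.pblock P x) ==> (g y == g x)]]
    = lift @: [set: {ffun S -> J}].
  by rewrite card_imset // cardsT card_ffun card_sig.
apply/setP => g; rewrite inE; apply/idP/imsetP => [/forallP g_const | [h _ ->]].
  exists [ffun B => g (xchoose (memB B))] => //; apply/ffunP => x; rewrite !ffunE.
  have /forallP/(_ (xchoose (memB (blk x)))) := g_const x.
  by move=> /implyP/(_ (xchooseP _))/eqP.
apply/forallP => x; apply/forallP => y; apply/implyP => yx.
by rewrite !ffunE (blkK (blk x) y yx).
Qed.

Section PartOf.
Variable n : nat.

Lemma mem_pblock_part_of (I : finType) (u : 'I_n -> I) k l :
  (l \in finset.pblock (part_of u) k) = (u k == u l).
Proof. by apply: pblock_equivalence_partition; rewrite ?inE //; split=> // /eqP->. Qed.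

Lemma part_of_eqP (I J : finType) (u : 'I_n -> I) (v : 'I_n -> J) :
  part_of u = part_of v <-> forall k l, (u k == u l) = (v k == v l).
Proof.
split=> [uv k l | uv]; first by rewrite -!mem_pblock_part_of uv.
by apply: eq_imset => k; apply/setP => l; rewrite !inE uv.
Qed.

Lemma refines_part_of (I J : finType) (w : 'I_n -> I) (u : 'I_n -> J) :
  (forall k l, w k == w l -> u k == u l) -> refines (part_of w) (part_of u).
Proof.
move=> wu _ /imsetP[k _ ->]; exists (finset.pblock (part_of u) k).
  by rewrite finset.pblock_mem // (cover_partition (preim_partitionP _ _)) inE.
by apply/fintype.subsetP => l; rewrite !inE mem_pblock_part_of => /wu.
Qed.

Lemma card_part_of_pair (I J : finType) (u : 'I_n -> I) :
  #|[set g : {ffun 'I_n -> J} | part_of (fun k => (u k, g k)) == part_of u]|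
    = (#|J| ^ #|part_of u|)%N.
Proof.
rewrite -(@card_ffun_blockwise_const _ J _ (preim_partitionP u _)); apply: eq_card => g.
rewrite !inE; apply/eqP/forallP => [ug k | g_const].
  apply/forallP => l; apply/implyP; rewrite mem_pblock_part_of => /[dup] ukl.
  by move/part_of_eqP: ug => <-; rewrite xpair_eqE ukl eq_sym.
apply/part_of_eqP => k l; rewrite xpair_eqE.
have /forallP/(_ l) := g_const k; rewrite mem_pblock_part_of => /implyP glk.
by case: (u k =P u l) glk => //= _ /(_ isT); rewrite eq_sym.
Qed.

End PartOf.

Section Multilinear.
Context {R : realType} {n : nat} {I : finType} {T : tensor_field R n I} {mu : I -> R}.
Hypothesis T_lin : multilinear_at T mu.

Lemma multilinear_upd_sum (J : Type) (s : seq J) (a : J -> R) (F : J -> I -> R) V k :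
  T mu (upd V k (fun i => \sum_(j <- s) a j * F j i))
    = \sum_(j <- s) a j * T mu (upd V k (F j)).
Proof.
elim: s => [|j s IHs]; last first.
  by rewrite big_cons -IHs -T_lin; congr (T mu (upd V k _)); apply/funext => i; rewrite big_cons.
rewrite big_nil; have := T_lin V k 1 (fun=> 0) (fun=> 0).
have -> : (fun _ : I => 1 * 0 + 0 : R) = fun=> 0 by apply/funext => i; rewrite mulr0 addr0.
have -> : (fun i : I => \sum_(j <- [::]) a j * F j i) = fun=> 0.
  by apply/funext => i; rewrite big_nil.
by rewrite mul1r => /esym/(canRL (addrK _)); rewrite subrr.
Qed.

Lemma multilinear_expand_in {J : finType} (a : 'I_n -> J -> R) (F : 'I_n -> J -> I -> R)
    (f0 : {ffun 'I_n -> J}) {r : seq 'I_n} : uniq r ->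
  T mu (fun k => if k \in r then (fun i => \sum_j a k j * F k j i) else F k (f0 k))
    = \sum_(f : {ffun 'I_n -> J} | [forall k, (k \notin r) ==> (f k == f0 k)])
        (\prod_(k <- r) a k (f k)) * T mu (fun k => F k (f k)).
Proof.
elim: r f0 => [|k0 r IHr] f0 /=.
  rewrite (big_pred1 f0) ?big_nil ?mul1r // => f.
  by apply/forallP/eqP => [f_f0 | -> k //]; apply/ffunP => k; exact/eqP/f_f0.
case/andP=> k0r uniq_r.
pose W k := if k \in r then (fun i => \sum_j a k j * F k j i) else F k (f0 k).
pose f0_at j := [ffun k => if k == k0 then j else f0 k].
have W_k0 j : upd W k0 (F k0 j)
    = fun k => if k \in r then (fun i => \sum_j a k j * F k j i) else F k (f0_at j k).
  by apply/funext => k; rewrite /upd /W ffunE; case: eqVneq => [->|]; rewrite ?(negPf k0r).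
transitivity (T mu (upd W k0 (fun i => \sum_j a k0 j * F k0 j i))).
  by congr (T mu); apply/funext => k; rewrite /upd /W in_cons; case: eqVneq => [->|].
rewrite multilinear_upd_sum (partition_big (fun f : {ffun _ -> J} => f k0) predT) //=.
apply: eq_bigr => j _; rewrite W_k0 IHr // big_distrr /=.
symmetry; apply: eq_big => [f | f /andP[_ /eqP fk0]]; last by rewrite big_cons fk0 mulrA.
apply/andP/forallP => [[/forallP f_f0 /eqP fk0] k | f_f0].
  rewrite ffunE; case: (eqVneq k k0) => [-> | kk0]; first by rewrite fk0 eqxx implybT.
  by have := f_f0 k; rewrite in_cons negb_or kk0.
split; last by have := f_f0 k0; rewrite ffunE eqxx k0r.
apply/forallP => k; have := f_f0 k; rewrite ffunE in_cons negb_or.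
by case: (eqVneq k k0).
Qed.

Lemma multilinear_expand {J : finType} (j0 : J) (a : 'I_n -> J -> R)
    (F : 'I_n -> J -> I -> R) :
  T mu (fun k i => \sum_j a k j * F k j i)
    = \sum_(f : {ffun 'I_n -> J}) (\prod_k a k (f k)) * T mu (fun k => F k (f k)).
Proof.
have := multilinear_expand_in a F [ffun=> j0] (index_enum_uniq 'I_n).
under eq_fun do rewrite mem_index_enum.
by move=> ->; apply: eq_bigl => f; apply/forallP => k; rewrite mem_index_enum.
Qed.

End Multilinear.

Lemma scaled_c_pos {R : realType} {I : finType} {lam : R} :
  0 < lam -> (0 < #|I|)%N -> posmeas (scaled_c (I:=I) lam).
Proof. by move=> lam_gt0 I_gt0 i; rewrite /scaled_c divr_gt0 // ltr0n. Qed.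

Lemma continuous_scaled_c {R : realType} {n : nat} {I : finType} {T : tensor_field R n I}
    (V : 'I_n -> I -> R) :
  continuous_field T -> (0 < #|I|)%N ->
  {within [set x : R | 0 < x], continuous (fun lam => T (scaled_c lam) V)}%classic.
Proof.
move=> T_cont I_gt0; rewrite continuous_open_subspace; last exact: open_gt.
move=> x; rewrite in_setE /= => x_gt0; apply/cvgrPdist_lt => eps eps_gt0.
have [d d_gt0 Td] := T_cont V _ (scaled_c_pos x_gt0 I_gt0) eps eps_gt0.
have card_gt0 : 0 < #|I|%:R :> R by rewrite ltr0n.
have e_gt0 : 0 < Num.min x (d * #|I|%:R) by rewrite lt_min x_gt0 mulr_gt0.
apply/nbhs_normP; exists (Num.min x (d * #|I|%:R)) => //= t.
rewrite /ball_ /= lt_min => /andP[tx td]; rewrite distrC; apply: Td.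
  apply: scaled_c_pos => //; move: tx; rewrite ltr_norml => /andP[_].
  by rewrite ltrBlDl -ltrBlDr subrr.
move=> i; rewrite /scaled_c -mulrBl normrM normfV normr_nat.
by rewrite ltr_pdivrMr // distrC.
Qed.

Definition theta {R : realType} {n : nat} (Theta : forall I : finType, tensor_field R n I)
    (I : finType) (lam : R) (iv : 'I_n -> I) : R :=
  Theta I (scaled_c lam) (fun k => delta_pt R (iv k)).

Section CongruentFamily.
Context {R : realType} {n : nat} {Theta : forall I : finType, tensor_field R n I}.
Hypothesis Theta_congr : congruent_family Theta.
Local Notation theta := (theta Theta).

Lemma congruent_family_multilinear {I : finType} {mu : I -> R} :
  posmeas mu -> multilinear_at (Theta I) mu.
Proof. by have [/(_ I)[T_lin _] _] := Theta_congr; exact: T_lin. Qed.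

Lemma congruent_family_fibration {I I' : finType} (kappa : I' -> I) {m : nat}
    {mu : I -> R} (V : 'I_n -> I -> R) :
  (0 < m)%N -> (forall i, #|[set i' | kappa i' == i]| = m) -> posmeas mu ->
  Theta I' (fun i' => mu (kappa i') / m%:R) (fun k i' => V k (kappa i') / m%:R)
    = Theta I mu V.
Proof.
move=> m_gt0 fibre_card mu_pos.
pose K i i' : R := (kappa i' == i)%:R / m%:R.
have pushK x : push K x = fun i' => x (kappa i') / m%:R.
  apply/funext => i'; rewrite /push (bigD1 (kappa i')) //= big1 => [|i /negPf ki].
    by rewrite /K eqxx mul1r addr0 mulrC.
  by rewrite /K eq_sym ki mul0r mul0r.
have K_congr : congruent_kernel K.
  split; last by exists kappa => i i' /negPf ki; rewrite /K ki mul0r.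
  split=> [i i' | i]; first by rewrite /K divr_ge0 ?ler0n.
  rewrite /K -big_distrl /=.
  have -> : \sum_i' (kappa i' == i)%:R = m%:R :> R.
    rewrite -(fibre_card i) -sum1_card natr_sum [RHS]big_mkcond.
    by apply: eq_bigr => i' _; rewrite inE; case: eqP.
  by rewrite divff // pnatr_eq0 -lt0n.
have K_pos nu : posmeas nu -> posmeas (push K nu).
  by move=> nu_pos i'; rewrite pushK divr_gt0 ?ltr0n.
rewrite -(Theta_congr.2 _ _ K K_congr K_pos mu mu_pos V) pushK.
by congr (Theta I' _); apply/funext => k; rewrite pushK.
Qed.

Lemma theta_relabel {I I' : finType} {e : I -> I'} {e' : I' -> I} (lam : R) (iv : 'I_n -> I) :
  cancel e e' -> cancel e' e -> 0 < lam -> (0 < #|I|)%N ->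
  theta I' lam (e \o iv) = theta I lam iv.
Proof.
move=> eK e'K lam_gt0 I_gt0.
have fibre i : #|[set i' | e' i' == i]| = 1%N.
  rewrite -(cards1 (e i)); apply: eq_card => i'; rewrite !inE.
  by apply/eqP/eqP => [<- | ->]; rewrite ?e'K ?eK.
rewrite /theta -(congruent_family_fibration e' _ _ fibre (scaled_c_pos lam_gt0 I_gt0)) //.
have card_II' : #|I| = #|I'| := bij_eq_card (Bijective eK e'K).
congr (Theta I' _ _).
  by apply/funext => i'; rewrite divr1 /scaled_c card_II'.
apply/funext => k; apply/funext => i'; rewrite divr1 /delta_pt /=.
by rewrite -[in e' i' == _](eK (iv k)) (can_eq e'K).
Qed.

Lemma theta_part_of (J : finType) (lam : R) (u v : 'I_n -> J) :
  0 < lam -> (0 < #|J|)%N -> part_of u = part_of v -> theta J lam u = theta J lam v.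
Proof.
move=> lam_gt0 J_gt0 /part_of_eqP uv.
pose phi x := if [pick k | u k == x] is Some k then v k else x.
have phi_u k : phi (u k) = v k.
  rewrite /phi; case: pickP => [l /eqP ul | /(_ k)]; last by rewrite eqxx.
  by apply/eqP; rewrite -uv ul.
have [s sE] : exists s : {perm J}, {in codom u, forall x, s x = phi x}.
  apply: perm_extend_in => _ _ /codomP[k ->] /codomP[l ->]; rewrite !phi_u => /eqP.
  by rewrite -uv => /eqP.
have -> : v = s \o u by apply/funext => k /=; rewrite sE ?codom_f ?phi_u.
by rewrite (theta_relabel _ _ (permK s) (permKV s)).
Qed.

Section MinimalPartition.
Variable P0 : {set {set 'I_n}}.
Hypothesis P0_partition : finset.partition P0 [set: 'I_n].
Hypothesis theta_finer : forall P : {set {set 'I_n}},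
  finset.partition P [set: 'I_n] -> strictly_refines P P0 ->
  forall lam : R, 0 < lam -> forall I : finType, (0 < #|I|)%N ->
  forall iv : 'I_n -> I, part_of iv = P -> theta I lam iv = 0.

Lemma theta_prod {I J : finType} {lam : R} {iv : 'I_n -> I} {w : 'I_n -> I * J} :
  0 < lam -> (0 < #|I|)%N -> (0 < #|J|)%N -> part_of iv = P0 -> part_of w = P0 ->
  theta (I * J)%type lam w = #|J|%:R ^+ (n - #|P0|) * theta I lam iv.
Proof.
move=> lam_gt0 I_gt0 J_gt0 iv_P0 w_P0.
have [j0 _] := card_gt0P J_gt0.
have IJ_gt0 : (0 < #|{: I * J}|)%N by rewrite card_prod muln_gt0 I_gt0 J_gt0.
pose c : R := #|J|%:R.
have c_neq0 : c != 0 by rewrite pnatr_eq0 -lt0n.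
have fibre i : #|[set p : (I * J)%type | p.1 == i]| = #|J|.
  have -> : [set p : (I * J)%type | p.1 == i] = finset.setX [set i] [set: J].
    by apply/setP => -[a b]; rewrite !inE andbT.
  by rewrite cardsX cards1 cardsT mul1n.
rewrite /theta -(congruent_family_fibration fst _ J_gt0 fibre (scaled_c_pos lam_gt0 I_gt0)).
have -> : (fun p : I * J => scaled_c lam p.1 / c) = scaled_c lam.
  by apply/funext => p; rewrite /scaled_c card_prod natrM invfM mulrA.
have -> : (fun k (p : I * J) => delta_pt R (iv k) p.1 / c)
    = fun k p => \sum_j c^-1 * delta_pt R (iv k, j) p.
  apply/funext => k; apply/funext => -[a b]; rewrite (bigD1 b) //= big1 => [|j jb].
    by rewrite /delta_pt xpair_eqE eqxx andbT addr0 mulrC.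
  by rewrite /delta_pt xpair_eqE [b == j]eq_sym (negPf jb) andbF mulr0.
rewrite (multilinear_expand (congruent_family_multilinear (scaled_c_pos lam_gt0 IJ_gt0)) j0).
have term (g : {ffun 'I_n -> J}) :
    theta (I * J)%type lam (fun k => (iv k, g k))
      = (part_of (fun k => (iv k, g k)) == P0)%:R * theta (I * J)%type lam w.
  case: eqP => [g_P0 | g_P0]; first by rewrite mul1r; apply: theta_part_of; rewrite ?g_P0.
  rewrite mul0r; apply: theta_finer (preim_partitionP _ _) _ _ lam_gt0 _ IJ_gt0 _ erefl.
  split; last exact/eqP.
  by rewrite -iv_P0; apply: refines_part_of => k l; rewrite xpair_eqE => /andP[].
rewrite (eq_bigr (fun g : {ffun 'I_n -> J} =>
    c^-1 ^+ n * (part_of (fun k => (iv k, g k)) == P0)%:R * theta (I * J)%type lam w)); last first.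
  by move=> g _; rewrite prodr_const card_ord -mulrA -term.
rewrite -big_distrl /= -big_distrr /=.
have -> : \sum_(g : {ffun 'I_n -> J}) (part_of (fun k => (iv k, g k)) == P0)%:R
    = c ^+ #|P0| :> R.
  rewrite -natrX -iv_P0 -card_part_of_pair -sum1_card natr_sum [RHS]big_mkcond.
  by apply: eq_bigr => g _; rewrite inE; case: eqP.
have P0_le_n : (#|P0| <= n)%N.
  by have := leq_card_partition P0_partition; rewrite cardsT card_ord.
rewrite -[in c^-1 ^+ n](subnK P0_le_n) exprVn exprD invfM mulfVK ?expf_neq0 //.
by rewrite mulVKf ?expf_neq0.
Qed.

Lemma theta_normalized_eq {I J : finType} {lam : R} {iv : 'I_n -> I} {jv : 'I_n -> J} :
  0 < lam -> (0 < #|I|)%N -> (0 < #|J|)%N -> part_of iv = P0 -> part_of jv = P0 ->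
  theta I lam iv / #|I|%:R ^+ (n - #|P0|) = theta J lam jv / #|J|%:R ^+ (n - #|P0|).
Proof.
move=> lam_gt0 I_gt0 J_gt0 iv_P0 jv_P0.
have /part_of_eqP iv_jv := etrans iv_P0 (esym jv_P0).
have ivjv_P0 : part_of (fun k => (iv k, jv k)) = P0.
  by rewrite -iv_P0; apply/part_of_eqP => k l; rewrite xpair_eqE -iv_jv andbb.
have jviv_P0 : part_of (fun k => (jv k, iv k)) = P0.
  by rewrite -iv_P0; apply/part_of_eqP => k l; rewrite xpair_eqE -iv_jv andbb.
have swapK (A B : finType) : cancel (fun p : A * B => (p.2, p.1)) (fun p => (p.2, p.1)).
  by case.
have := theta_prod lam_gt0 I_gt0 J_gt0 iv_P0 ivjv_P0.
rewrite -(theta_relabel _ _ (swapK _ _) (swapK _ _)) //; last first.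
  by rewrite card_prod muln_gt0 I_gt0.
rewrite [LHS](theta_prod lam_gt0 J_gt0 I_gt0 jv_P0 jviv_P0) => E.
apply/eqP; rewrite eqr_div ?expf_neq0 ?pnatr_eq0 -?lt0n //.
by rewrite mulrC -E mulrC.
Qed.

End MinimalPartition.

End CongruentFamily.

Theorem lemma4p6 (R : realType) (n : nat)
  (Theta : forall I : finType, tensor_field R n I)
  (hTheta : congruent_family Theta)
  (P0 : {set {set 'I_n}}) (hP0 : finset.partition P0 [set: 'I_n])
  (hzero : forall P : {set {set 'I_n}}, finset.partition P [set: 'I_n] ->
     strictly_refines P P0 ->
     forall (lambda : R), 0 < lambda ->
     forall (I : finType), (0 < #|I|)%N ->
     forall iv : 'I_n -> I, part_of iv = P ->
       Theta I (scaled_c (I:=I) lambda) (fun k => delta_pt R (iv k)) = 0) :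
  exists f : R -> R,
    {within [set x : R | 0 < x], continuous f}%classic /\
    forall (lambda : R), 0 < lambda ->
    forall (I : finType), (0 < #|I|)%N ->
    forall iv : 'I_n -> I, part_of iv = P0 ->
      Theta I (scaled_c (I:=I) lambda) (fun k => delta_pt R (iv k))
        = f lambda * (#|I|%:R) ^+ (n - #|P0|).
Proof.
pose S := {set 'I_n}; pose sv k : S := finset.pblock P0 k.
have sv_P0 : part_of sv = P0 := preim_partition_pblock hP0.
have S_gt0 : (0 < #|S|)%N by apply/card_gt0P; exists finset.set0.
exists (fun lam => theta Theta S lam sv / #|S|%:R ^+ (n - #|P0|)); split.
  have [/(_ S)[_ S_cont] _] := hTheta.
  have := continuous_scaled_c (fun k => delta_pt R (sv k)) S_cont S_gt0.
  rewrite !continuous_open_subspace; try exact: open_gt.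
  by move=> theta_cont x x_gt0; apply: cvgMr_tmp; exact: theta_cont.
move=> lam lam_gt0 I I_gt0 iv iv_P0.
rewrite -(theta_normalized_eq hTheta P0 hP0 hzero lam_gt0 I_gt0 S_gt0 iv_P0 sv_P0).
by rewrite divfK // expf_neq0 // pnatr_eq0 -lt0n.
Qed.
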